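(* Let $f:\mathbb{R}^d\to\mathbb{R}$ and $P:\mathbb{R}^d\to\mathbb{R}^s$ be continuously differentiable, $D\subseteq\mathbb{R}^s$ closed, $\Omega=\{z\mid P(z)\in D\}$, $\bar z\in\Omega$, and assume that GGCQ holds at $\bar z$. Then $\bar z$ is a sharp minimum of the problem $\min f(z)$ s.t. $P(z)\in D$ if and only if there is some $\alpha'>0$ such that \[\langle\nabla f(\bar z),u\rangle\ge\alpha'\|u\|\quad\forall u\in T^{\rm lin}_{P,D}(\bar z).\]
   Context: Tangent cone $T_\Omega(\bar z)=\{w\mid \exists t_k\downarrow0,\ w_k\to w,\ \bar z+t_kw_k\in\Omega\}$; polar cone $K^\ast=\{z^\ast\mid\langle z^\ast,w\rangle\le0\ \forall w\in K\}$; regular normal cone $\widehat N_\Omega(\bar z)=(T_\Omega(\bar z))^\ast$. Linearized tangent cone $T^{\rm lin}_{P,D}(\bar z)=\{u\mid\nabla P(\bar z)u\in T_D(P(\bar z))\}$. GGCQ holds at $\bar z$ if $\widehat N_\Omega(\bar z)=(T^{\rm lin}_{P,D}(\bar z))^\ast$. A point $\bar z\in\Omega$ is a sharp minimum if there is $\alpha>0$ such that $f(z)\ge f(\bar z)+\alpha\|z-\bar z\|$ for all $z\in\Omega$ close to $\bar z$. *)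

From HB Require Import structures.
From mathcomp Require Import all_boot all_order all_algebra.
From mathcomp Require Import all_classical all_reals all_analysis.
Set Implicit Arguments. Unset Strict Implicit. Unset Printing Implicit Defensive.
Import Order.TTheory GRing.Theory Num.Theory.
Import numFieldNormedType.Exports.
Local Open Scope classical_set_scope.
Local Open Scope ring_scope.

Definition dotv {R : realType} {n : nat} (a b : 'rV[R]_n) : R :=
  \sum_(i < n) a 0 i * b 0 i.
Definition enorm {R : realType} {n : nat} (a : 'rV[R]_n) : R :=
  Num.sqrt (dotv a a).

(* continuously differentiable map between finite-dim. spaces:
   differentiable everywhere, with x |-> 'd f x continuous
   (tested pointwise on directions; equivalent in finite dimension) *)
Definition C1 {R : realType} {n m : nat} (f : 'rV[R]_n -> 'rV[R]_m) : Prop :=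
  (forall x, differentiable f x) /\ (forall v, continuous (fun x => 'd f x v)).
Definition C1R {R : realType} {n : nat} (f : 'rV[R]_n -> R) : Prop :=
  (forall x, differentiable f x) /\ (forall v, continuous (fun x => 'd f x v)).

Definition tangent_cone {R : realType} {n : nat} (Om : set 'rV[R]_n) (z : 'rV[R]_n)
  : set 'rV[R]_n :=
  [set w | exists (t : nat -> R) (wk : nat -> 'rV[R]_n),
     (forall k, 0 < t k) /\ t @ \oo --> (0 : R) /\ wk @ \oo --> w /\
     (forall k, Om (z + t k *: wk k))].

Definition polar {R : realType} {n : nat} (K : set 'rV[R]_n) : set 'rV[R]_n :=
  [set zs | forall w, K w -> dotv zs w <= 0].

Definition reg_normal_cone {R : realType} {n : nat} (Om : set 'rV[R]_n) z :=
  polar (tangent_cone Om z).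

Definition lin_tangent_cone {R : realType} {d s : nat}
  (P : 'rV[R]_d -> 'rV[R]_s) (D : set 'rV[R]_s) (z : 'rV[R]_d) : set 'rV[R]_d :=
  [set u | tangent_cone D (P z) ('d P z u)].

Definition feas {R : realType} {d s : nat} (P : 'rV[R]_d -> 'rV[R]_s)
  (D : set 'rV[R]_s) : set 'rV[R]_d := [set z | D (P z)].

Definition GGCQ {R : realType} {d s : nat} (P : 'rV[R]_d -> 'rV[R]_s)
  (D : set 'rV[R]_s) (z : 'rV[R]_d) : Prop :=
  reg_normal_cone (feas P D) z = polar (lin_tangent_cone P D z).

Definition sharp_min {R : realType} {n : nat} (f : 'rV[R]_n -> R)
  (Om : set 'rV[R]_n) (z : 'rV[R]_n) : Prop :=
  exists2 alpha : R, 0 < alpha &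
    \forall y \near z, Om y -> f z + alpha * enorm (y - z) <= f y.

(* Sharpness is read off on directions.  Along a tangent sequence
   zbar + t_k w_k the difference quotients of f tend to 'd f zbar w, so a sharp
   minimum gives alpha |w| <= 'd f zbar w on the tangent cone.  Conversely, if
   sharpness failed even with constant alpha/2, normalizing a sequence of
   violating feasible points and extracting a convergent subsequence on the
   compact unit sphere produces a unit tangent direction w with
   'd f zbar w <= alpha/2.  The tangent cone always lies in the linearized one;
   for the other direction GGCQ is used only through polars: if
   alpha |w| <= <g, w> on the tangent cone, then alpha u/|u| - g belongs to its
   polar by Cauchy-Schwarz, hence to the polar of the linearized cone, and
   testing it against u gives alpha |u| <= <g, u>. *)

From mathcomp Require Import all_boot all_order all_algebra.
From mathcomp Require Import all_classical all_reals all_analysis.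
From mathcomp Require Import ring lra.
Import Order.TTheory GRing.Theory Num.Theory.
Import numFieldNormedType.Exports.
Local Open Scope classical_set_scope.
Local Open Scope ring_scope.
Set Implicit Arguments. Unset Strict Implicit. Unset Printing Implicit Defensive.

Section Sequences.
Variables (R : realType) (V : normedModType R).

Lemma not_near_seq (z : V) (Q : V -> Prop) :
  ~ (\forall y \near z, Q y) -> exists Y : nat -> V, Y @ \oo --> z /\ forall k, ~ Q (Y k).
Proof.
move=> notQ.
have Yk k : exists y, `|z - y| < k.+1%:R^-1 /\ ~ Q y.
  apply: contrapT => noY; apply: notQ; apply/nbhs_normP.
  exists k.+1%:R^-1 => [|y /= zy]; first by rewrite /= invr_gt0.
  by apply: contrapT => nQy; apply: noY; exists y.
have [Y HY] := choice Yk.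
exists Y; split => [|k]; last by have [] := HY k.
apply/cvgrPdist_lt => e e0.
apply: filterS (near_infty_natSinv_lt (PosNum e0)) => k /= ke.
by have [zY _] := HY k; apply: lt_trans ke.
Qed.

Lemma cluster_subseq_cvg (u : nat -> V) (w : V) : cluster (u @ \oo) w ->
  exists K : nat -> nat, (forall j, j <= K j)%N /\ u \o K @ \oo --> w.
Proof.
move=> uw.
have Kj j : exists k, (j <= k)%N /\ `|w - u k| < j.+1%:R^-1.
  have [||k [[{}k jk <-] wuk]] := uw (u @` [set k | (j <= k)%N]) (ball w j.+1%:R^-1).
  - by apply: filterS (nbhs_infty_ge j) => k jk; exists k.
  - by apply: nbhsx_ballx; rewrite invr_gt0.
  by exists k; split => //; rewrite -ball_normE in wuk.
have [K HK] := choice Kj.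
exists K; split => [j|]; first by have [] := HK j.
apply/cvgrPdist_lt => e e0.
apply: filterS (near_infty_natSinv_lt (PosNum e0)) => j /= je.
by have [_ wK] := HK j; apply: lt_trans je.
Qed.

End Sequences.

Lemma cvg_subseq (T : topologicalType) (u : nat -> T) (K : nat -> nat) (l : T) :
  (forall j, j <= K j)%N -> u @ \oo --> l -> u \o K @ \oo --> l.
Proof.
move=> K_ge ul; apply: cvg_comp ul => A [N _ NA]; exists N => // j /= Nj.
exact/NA/(leq_trans Nj (K_ge j)).
Qed.

Section DifferenceQuotient.
Variables (R : realType) (U W : normedModType R) (F : U -> W) (x : U).
Hypothesis dF : differentiable F x.
Variables (t : nat -> R) (v : nat -> U) (w : U).
Hypotheses (t_gt0 : forall k, 0 < t k) (t0 : t @ \oo --> 0) (vw : v @ \oo --> w).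

Lemma cvg_scaled_remainder :
  (fun k => (t k)^-1 *: (F (x + t k *: v k) - F x - 'd F x (t k *: v k))) @ \oo --> 0.
Proof.
have h0 : (fun k => t k *: v k) @ \oo --> (0 : U) by rewrite -(scale0r w); exact: cvgZ.
have v_bnd : \forall k \near \oo, `|v k| < `|w| + 1.
  by apply: cvgr_lt; [exact: cvg_norm vw | rewrite ltrDl].
apply/cvgr0Pnorm_lt => e e0.
have c_gt0 : 0 < `|w| + 1 by rewrite ltr_wpDl.
have eta_gt0 : 0 < e / (`|w| + 1) by rewrite divr_gt0.
have /eqaddoP/(_ _ eta_gt0) rem := diff_locally dF.
apply: filterS (filterI v_bnd (h0 _ rem)) => k [/= vk remk].
have {}remk : `|F (t k *: v k + x) - (F x + 'd F x (t k *: v k))| <=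
    e / (`|w| + 1) * `|t k *: v k| by [].
rewrite opprD addrA (addrC _ x) in remk.
rewrite normrZ gtr0_norm ?invr_gt0 // mulrC ltr_pdivrMr //.
apply: (le_lt_trans remk); rewrite normrZ gtr0_norm // mulrCA [e * t k]mulrC ltr_pM2l //.
by rewrite mulrAC ltr_pdivrMr // ltr_pM2l.
Qed.

Lemma cvg_diff_quotient :
  (fun k => (t k)^-1 *: (F (x + t k *: v k) - F x)) @ \oo --> 'd F x w.
Proof.
have dv : (fun k => 'd F x (v k)) @ \oo --> 'd F x w.
  by apply: (continuous_cvg _ _ vw); exact: diff_continuous.
rewrite -[X in _ --> X]add0r.
have -> : (fun k => (t k)^-1 *: (F (x + t k *: v k) - F x)) =
    (fun k => (t k)^-1 *: (F (x + t k *: v k) - F x - 'd F x (t k *: v k)) + 'd F x (v k)).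
  apply: funext => k; rewrite linearZ [in RHS]scalerBr scalerA mulVf ?gt_eqF //.
  by rewrite scale1r subrK.
exact: cvgD cvg_scaled_remainder dv.
Qed.

End DifferenceQuotient.

Definition normalized {R : realType} {n : nat} (x : 'rV[R]_n) := (enorm x)^-1 *: x.

Section EuclideanNorm.
Variables (R : realType) (n : nat).
Implicit Types (x y u w : 'rV[R]_n).

Lemma dotvC x y : dotv x y = dotv y x.
Proof. by apply: eq_bigr => i _; rewrite mulrC. Qed.

Lemma dotvDl x y w : dotv (x + y) w = dotv x w + dotv y w.
Proof. by rewrite /dotv -big_split; apply: eq_bigr => i _; rewrite mxE mulrDl. Qed.

Lemma dotvZl (c : R) x w : dotv (c *: x) w = c * dotv x w.
Proof. by rewrite /dotv mulr_sumr; apply: eq_bigr => i _; rewrite mxE mulrA. Qed.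

Lemma dotvNl x w : dotv (- x) w = - dotv x w.
Proof. by rewrite -scaleN1r dotvZl mulN1r. Qed.

Lemma dotvZr (c : R) x w : dotv w (c *: x) = c * dotv w x.
Proof. by rewrite !(dotvC w) dotvZl. Qed.

Lemma dotv0r x : dotv x 0 = 0.
Proof. by rewrite /dotv big1 // => i _; rewrite mxE mulr0. Qed.

Lemma dotvv_ge0 x : 0 <= dotv x x.
Proof. by apply: sumr_ge0 => i _; rewrite -expr2 sqr_ge0. Qed.

Lemma enorm_ge0 x : 0 <= enorm x.
Proof. exact: sqrtr_ge0. Qed.

Lemma enorm_sqr x : enorm x ^+ 2 = dotv x x.
Proof. by rewrite sqr_sqrtr // dotvv_ge0. Qed.

Lemma enorm0 : enorm (0 : 'rV[R]_n) = 0.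
Proof. by rewrite /enorm dotv0r sqrtr0. Qed.

Lemma enorm_eq0 x : (enorm x == 0) = (x == 0).
Proof.
apply/idP/eqP => [|->]; last by rewrite enorm0.
rewrite sqrtr_eq0 => xx_le0.
have xx0 : dotv x x = 0 by apply/eqP; rewrite eq_le xx_le0 dotvv_ge0.
have xi0 := psumr_eq0P (fun i _ => sqr_ge0 (x 0 i) : 0 <= x 0 i * x 0 i) xx0.
apply/rowP => i; rewrite mxE; apply/eqP.
by rewrite -sqrf_eq0 expr2 xi0.
Qed.

Lemma enormZ (c : R) x : enorm (c *: x) = `|c| * enorm x.
Proof.
by rewrite /enorm dotvZl dotvZr mulrA -expr2 sqrtrM ?sqr_ge0 // sqrtr_sqr.
Qed.

Lemma dotv_le_enorm u w : dotv u w <= enorm u * enorm w.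
Proof.
have [ab0|ab_neq0] := eqVneq (enorm u * enorm w) 0.
  rewrite ab0; move/eqP: ab0; rewrite mulf_eq0 !enorm_eq0 => /orP[]/eqP->.
    by rewrite dotvC dotv0r.
  by rewrite dotv0r.
have ab_gt0 : 0 < enorm u * enorm w by rewrite lt_def ab_neq0 mulr_ge0 ?enorm_ge0.
have : 2 * (enorm u * enorm w) * dotv u w <=
       enorm w ^+ 2 * dotv u u + enorm u ^+ 2 * dotv w w.
  rewrite /dotv !mulr_sumr -big_split; apply: ler_sum => i _ /=.
  rewrite -subr_ge0 (_ : _ - _ = (enorm w * u 0 i - enorm u * w 0 i) ^+ 2).
    exact: sqr_ge0.
  ring.
rewrite -!enorm_sqr (_ : _ + _ = 2 * (enorm u * enorm w) * (enorm u * enorm w)).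
  by rewrite -mulrA -[X in _ <= X]mulrA !ler_pM2l.
ring.
Qed.

Lemma norm_le_enorm x : `|x| <= enorm x.
Proof.
rewrite [`|x|]mx_normrE; apply: bigmax_le => [|[i j] _ /=]; first exact: enorm_ge0.
rewrite (ord1 i) -sqrtr_sqr ler_sqrt ?dotvv_ge0 // /dotv (bigD1 j) //= -expr2.
by rewrite lerDl; apply: sumr_ge0 => k _; rewrite -expr2 sqr_ge0.
Qed.

Lemma enorm_continuous : continuous (@enorm R n).
Proof.
move=> x; change {for x, continuous (Num.sqrt \o fun y => dotv y y)}.
apply: continuous_comp; last exact: sqrt_continuous.
apply: (cvg_big add_continuous (nbhs_filter x)) => i _.
by apply: cvgM; exact: coord_continuous.
Qed.

Lemma compact_unit_sphere : compact [set x : 'rV[R]_n | enorm x = 1].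
Proof.
apply: bounded_closed_compact.
  exists 1; split => // M M1 x /= x1.
  by rewrite (le_trans (norm_le_enorm x)) // x1 ltW.
change (closed (@enorm R n @^-1` [set 1])).
by apply: preimage_closed => [x _|]; [exact: enorm_continuous | exact: closed_eq].
Qed.

Lemma enorm_normalized x : x != 0 -> enorm (normalized x) = 1.
Proof.
rewrite -enorm_eq0 => x_neq0.
by rewrite enormZ ger0_norm ?invr_ge0 ?enorm_ge0 // mulVf.
Qed.

Lemma scale_enorm_normalized x : enorm x *: normalized x = x.
Proof.
have [->|x_neq0] := eqVneq x 0; first by rewrite /normalized !scaler0.
by rewrite scalerA mulfV ?scale1r // enorm_eq0.
Qed.

Lemma normalized_subseq_cvg (u : nat -> 'rV[R]_n) : (forall k, u k != 0) ->
  exists K w, [/\ forall j, (j <= K j)%N, enorm w = 1 & normalized \o u \o K @ \oo --> w].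
Proof.
move=> u_neq0.
have sphere_u : \forall k \near \oo, enorm (normalized (u k)) = 1.
  by apply: nearW => k; exact: enorm_normalized.
have [w [w1 uw]] : [set x | enorm x = 1] `&` cluster (normalized \o u @ \oo) !=set0.
  by apply: compact_unit_sphere; exact: sphere_u.
have [K [K_ge Kw]] := cluster_subseq_cvg uw.
by exists K, w.
Qed.

End EuclideanNorm.

Section FirstOrderConditions.
Variables (R : realType) (n : nat).
Implicit Types (f : 'rV[R]_n -> R) (Om : set 'rV[R]_n) (z : 'rV[R]_n).

Lemma tangent_cone_sharp_ineq f Om z (a : R) : differentiable f z ->
  (\forall y \near z, Om y -> f z + a * enorm (y - z) <= f y) ->
  forall w, tangent_cone Om z w -> a * enorm w <= 'd f z w.
Proof.
move=> df sharp w [t [v [t_gt0 [t0 [vw Om_v]]]]].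
have zv : (fun k => z + t k *: v k) @ \oo --> z.
  rewrite -[X in _ --> X]addr0 -(scale0r w).
  by apply: cvgD; [exact: cvg_cst | exact: cvgZ].
have av : (fun k => a * enorm (v k)) @ \oo --> a * enorm w.
  apply: cvgM; first exact: cvg_cst.
  by apply: (continuous_cvg _ _ vw); exact: enorm_continuous.
apply: (ler_cvg_to av (cvg_diff_quotient df t_gt0 t0 vw)).
have sharp_v : \forall k \near \oo, Om (z + t k *: v k) ->
    f z + a * enorm (z + t k *: v k - z) <= f (z + t k *: v k) := zv _ sharp.
apply: filterS sharp_v => k /(_ (Om_v k)).
rewrite addrAC subrr add0r enormZ gtr0_norm // => sharp_k.
rewrite -[_ *: _]/(_ * _) ler_pdivlMl //; lra.
Qed.

Lemma sharp_min_of_tangent_ineq f Om z (a : R) : differentiable f z -> 0 < a ->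
  (forall w, tangent_cone Om z w -> a * enorm w <= 'd f z w) -> sharp_min f Om z.
Proof.
move=> df a_gt0 tangent_ineq; exists (a / 2); first by rewrite divr_gt0.
apply: contrapT => /not_near_seq[Y [Yz notsharp]].
have bad k : Om (Y k) /\ f (Y k) < f z + a / 2 * enorm (Y k - z).
  by have /not_implyP[? /negP] := notsharp k; rewrite -ltNge.
have Y_neq k : Y k - z != 0.
  apply: contraTneq (bad k).2 => /subr0_eq ->.
  by rewrite subrr enorm0 mulr0 addr0 ltxx.
have [K [w [K_ge w1 Kw]]] := normalized_subseq_cvg Y_neq.
pose t j := enorm (Y (K j) - z).
have t_gt0 j : 0 < t j by rewrite lt_def enorm_eq0 Y_neq enorm_ge0.
have t0 : t @ \oo --> 0.
  have Yz0 : (fun k => enorm (Y k - z)) @ \oo --> enorm (z - z).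
    by apply: (continuous_cvg _ _ (cvgB Yz (cvg_cst z))); exact: enorm_continuous.
  by rewrite subrr enorm0 in Yz0; exact: cvg_subseq K_ge Yz0.
have YK j : z + t j *: normalized (Y (K j) - z) = Y (K j).
  by rewrite scale_enorm_normalized addrC subrK.
have Tw : tangent_cone Om z w.
  exists t, (normalized \o (fun k => Y k - z) \o K).
  by split=> //; split=> //; split=> // j; rewrite /= YK; exact: (bad _).1.
have : 'd f z w <= a / 2.
  apply: (cvgr_to_le (cvg_diff_quotient df t_gt0 t0 Kw)); apply: nearW => j /=.
  rewrite YK -[_ *: _]/(_ * _) ler_pdivrMl //.
  have := (bad (K j)).2; rewrite -/(t j); lra.
have := tangent_ineq w Tw; rewrite w1 mulr1; lra.
Qed.

Definition gradient f z : 'rV[R]_n := \row_i 'd f z (delta_mx 0 i).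

Lemma diff_dotv_gradient f z u : 'd f z u = dotv (gradient f z) u.
Proof.
rewrite {1}(row_sum_delta u) linear_sum /dotv; apply: eq_bigr => i _.
by rewrite linearZ mxE /= mulrC.
Qed.

Lemma polar_sub_sharp_ineq (K L : set 'rV[R]_n) (g : 'rV[R]_n) (a : R) :
  0 < a -> polar K `<=` polar L ->
  (forall w, K w -> a * enorm w <= dotv g w) ->
  forall u, L u -> a * enorm u <= dotv g u.
Proof.
move=> a_gt0 KL gK u Lu.
have [->|u_neq0] := eqVneq u 0; first by rewrite enorm0 dotv0r mulr0.
have u_gt0 : 0 < enorm u by rewrite lt_def enorm_eq0 u_neq0 enorm_ge0.
pose zs := (a / enorm u) *: u - g.
have zsK : polar K zs.
  move=> w Kw; rewrite /zs dotvDl dotvNl dotvZl subr_le0.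
  apply: le_trans (gK w Kw).
  apply: le_trans (ler_wpM2l _ (dotv_le_enorm u w)) _; first by rewrite ltW ?divr_gt0.
  by rewrite mulrA divfK ?gt_eqF.
have := KL zs zsK u Lu; rewrite /zs dotvDl dotvNl dotvZl -enorm_sqr subr_le0.
by rewrite expr2 mulrA divfK ?gt_eqF.
Qed.

End FirstOrderConditions.

Lemma tangent_cone_sub_lin (R : realType) (d s : nat) (P : 'rV[R]_d -> 'rV[R]_s)
    (D : set 'rV[R]_s) (z : 'rV[R]_d) :
  differentiable P z -> tangent_cone (feas P D) z `<=` lin_tangent_cone P D z.
Proof.
move=> dP w [t [v [t_gt0 [t0 [vw D_Pv]]]]].
exists t, (fun k => (t k)^-1 *: (P (z + t k *: v k) - P z)).
split=> //; split=> //; split; first exact: cvg_diff_quotient.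
by move=> k; rewrite scalerA mulfV ?gt_eqF // scale1r addrC subrK; exact: D_Pv.
Qed.

Theorem lemma4p4 (R : realType) (d s : nat) (f : 'rV[R]_d -> R)
  (P : 'rV[R]_d -> 'rV[R]_s) (D : set 'rV[R]_s) (zbar : 'rV[R]_d) :
  C1R f -> C1 P -> closed D -> feas P D zbar -> GGCQ P D zbar ->
  (sharp_min f (feas P D) zbar <->
   exists2 alpha' : R, 0 < alpha' &
     forall u, lin_tangent_cone P D zbar u -> alpha' * enorm u <= 'd f zbar u).
Proof.
move=> [df _] [dP _] _ _ ggcq; split => [[a a_gt0 sharp]|[a a_gt0 lin_ineq]].
  exists a => // u; rewrite diff_dotv_gradient.
  apply: (polar_sub_sharp_ineq a_gt0) => [|w Tw].
    by rewrite -ggcq; exact: subset_refl.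
  by rewrite -diff_dotv_gradient; exact: tangent_cone_sharp_ineq sharp w Tw.
apply: (sharp_min_of_tangent_ineq (df zbar) a_gt0) => w Tw.
exact/lin_ineq/(tangent_cone_sub_lin (dP zbar)).
Qed.
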